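(* Consider the cellular $1$-chain on the surface $D$ $$\tilde\delta^E_{\mathrm{edge}}:=\sum_{x\in E}\sum_{y:\,in(y)=x}y-\sum_{x\in\iota E}\sum_{y:\,in(y)=x}y .$$ Then $\tilde\delta^E_{\mathrm{edge}}$ is a boundary modulo $3$. More precisely, for any face $z_o$ of $D$, letting $D(z_o)$ be the complement in $D$ of the interiors of $z_o$ and $\iota z_o$, there are integers $n_z$ indexed by the faces $z\neq z_o,\iota z_o$ such that $\tilde\delta^E_{\mathrm{edge}}\equiv\sum_z n_z\,\partial z$ modulo $3$ times the group of cellular $1$-chains; i.e. $\tilde\delta^E_{\mathrm{edge}}$ is a boundary modulo $3$ as a chain on $D(z_o)$.
   Context: $D\subset\mathbb R^3$ is a regular dodecahedron centered at $0$ regarded as a cellular 2-sphere (vertices, oriented edges, faces with their outward-induced orientation), $\iota=-\mathrm{id}$. For an oriented edge $y$, $in(y)$ is its initial vertex. $\mathcal K$ is the set of five cubes inscribed in $D$; for a fixed $e\in\mathcal K$, its 8 vertices split into two 4-element sets of pairwise non-adjacent (in the cube) vertices, $E$ and $\iota E$. *)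

(* A concrete, exact model of the regular dodecahedron D
   centred at 0, as a cellular 2-sphere.

   Coordinates live in Z[phi] = {a + b*phi | a, b : int}, phi = (1+sqrt 5)/2
   the golden ratio (phi^2 = phi + 1); an element a + b*phi is encoded as
   the pair (a, b).  All of D's vertex coordinates (scaled by the harmless
   factor phi) lie in Z[phi], so everything below is exact. *)
From mathcomp Require Import all_boot all_order all_algebra.
Set Implicit Arguments.
Unset Strict Implicit.
Unset Printing Implicit Defensive.
Import Order.TTheory GRing.Theory Num.Theory.
Local Open Scope ring_scope.

Definition zphi := (int * int)%type.     (* (a, b) stands for a + b*phi *)
Definition zp (a b : int) : zphi := (a, b).
Definition zadd (x y : zphi) : zphi := (x.1 + y.1, x.2 + y.2).
Definition zopp (x : zphi) : zphi := (- x.1, - x.2).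
(* (a + b phi)(c + d phi) = (ac + bd) + (ad + bc + bd) phi, using phi^2 = phi + 1 *)
Definition zmul (x y : zphi) : zphi :=
  (x.1 * y.1 + x.2 * y.2, x.1 * y.2 + x.2 * y.1 + x.2 * y.2).
(* zpos x <=> the real number a + b*phi is > 0.
   With s := 2a + b we have 2(a + b phi) = s + b sqrt 5. *)
Definition zpos (x : zphi) : bool :=
  let s := 2 * x.1 + x.2 in
  let q := x.2 in
  if (0 <= s) && (0 <= q) then (s != 0) || (q != 0)
  else if (s <= 0) && (q <= 0) then false
  else if 0 < s then 5 * q ^+ 2 < s ^+ 2     (* s > 0, q < 0 *)
  else s ^+ 2 < 5 * q ^+ 2.                  (* s < 0, q > 0 *)

Definition vec := (zphi * zphi * zphi)%type.
Definition vx (v : vec) : zphi := v.1.1.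
Definition vy (v : vec) : zphi := v.1.2.
Definition vz (v : vec) : zphi := v.2.
Definition mkv (x y z : zphi) : vec := (x, y, z).
Definition vadd (u v : vec) : vec := mkv (zadd (vx u) (vx v)) (zadd (vy u) (vy v)) (zadd (vz u) (vz v)).
Definition vopp (u : vec) : vec := mkv (zopp (vx u)) (zopp (vy u)) (zopp (vz u)).
Definition vsub (u v : vec) : vec := vadd u (vopp v).
Definition vdbl (u : vec) : vec := vadd u u.
Definition vdot (u v : vec) : zphi :=
  zadd (zadd (zmul (vx u) (vx v)) (zmul (vy u) (vy v))) (zmul (vz u) (vz v)).
Definition vcross (u v : vec) : vec :=
  mkv (zadd (zmul (vy u) (vz v)) (zopp (zmul (vz u) (vy v))))
      (zadd (zmul (vz u) (vx v)) (zopp (zmul (vx u) (vz v))))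
      (zadd (zmul (vx u) (vy v)) (zopp (zmul (vy u) (vx v)))).
Definition vdet (a b n : vec) : zphi := vdot n (vcross a b).

Definition z0 : zphi := zp 0 0.
Definition z1 : zphi := zp 1 0.
Definition zf : zphi := zp 0 1.
Definition zf2 : zphi := zp 1 1.
Definition vzero : vec := mkv z0 z0 z0.

(* ---------- vertices (20) ----------
   The regular dodecahedron with vertices (±1,±1,±1), (0,±1/phi,±phi),
   (±1/phi,±phi,0), (±phi,0,±1/phi), scaled by phi. *)
Definition vlist : seq vec :=
  [:: mkv zf zf zf; mkv zf zf (zopp zf); mkv zf (zopp zf) zf; mkv zf (zopp zf) (zopp zf);
      mkv (zopp zf) zf zf; mkv (zopp zf) zf (zopp zf); mkv (zopp zf) (zopp zf) zf;
      mkv (zopp zf) (zopp zf) (zopp zf);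
      mkv z0 z1 zf2; mkv z0 z1 (zopp zf2); mkv z0 (zopp z1) zf2; mkv z0 (zopp z1) (zopp zf2);
      mkv z1 zf2 z0; mkv z1 (zopp zf2) z0; mkv (zopp z1) zf2 z0; mkv (zopp z1) (zopp zf2) z0;
      mkv zf2 z0 z1; mkv zf2 z0 (zopp z1); mkv (zopp zf2) z0 z1; mkv (zopp zf2) z0 (zopp z1)].

Definition vert := 'I_20.
Definition vc (v : vert) : vec := nth vzero vlist v.

(* edges: two vertices are joined by an edge of D iff their distance is the
   edge length (= 2 after scaling, i.e. squared distance 4). *)
Definition adj (a b : vert) : bool :=
  vdot (vsub (vc a) (vc b)) (vsub (vc a) (vc b)) == zp 4 0.

(* ---------- faces (12) ----------
   Face z is given by its outward normal nrm z (the 12 vectors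
   (0,±phi,±1), (±phi,±1,0), (±1,0,±phi)); its vertices are the vertices of D
   on the supporting plane  x . nrm z = 1 + 2 phi  (the maximum of x . nrm z). *)
Definition flist : seq vec :=
  [:: mkv z0 zf z1; mkv z0 zf (zopp z1); mkv z0 (zopp zf) z1; mkv z0 (zopp zf) (zopp z1);
      mkv zf z1 z0; mkv zf (zopp z1) z0; mkv (zopp zf) z1 z0; mkv (zopp zf) (zopp z1) z0;
      mkv z1 z0 zf; mkv z1 z0 (zopp zf); mkv (zopp z1) z0 zf; mkv (zopp z1) z0 (zopp zf)].

Definition face := 'I_12.
Definition nrm (z : face) : vec := nth vzero flist z.
Definition on_face (z : face) (v : vert) : bool := vdot (vc v) (nrm z) == zp 1 2.

Definition iotaV (v : vert) : vert := odflt v [pick w | vc w == vopp (vc v)].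
Definition iotaF (z : face) : face := odflt z [pick w | nrm w == vopp (nrm z)].
Definition iotaS (E : {set vert}) : {set vert} := iotaV @: E.

(* ---------- cellular 1-chains ----------
   A 1-chain with integer coefficients is represented by its coefficient
   function on oriented edges  c : vert -> vert -> int  (only values on
   pairs (a,b) with adj a b matter), with the convention that the reversed
   edge carries the opposite coefficient:  the chain "oriented edge y = (a,b)"
   has coefficient 1 at (a,b) and -1 at (b,a). *)

(* boundary of the face z with its outward-induced orientation: the boundary
   edge (a,b) is positively oriented iff it turns counterclockwise around the
   outward normal, i.e. nrm z . (a x b) > 0. *)
Definition bdry (z : face) (a b : vert) : int :=
  if [&& adj a b, on_face z a & on_face z b] then
    (if zpos (vdet (vc a) (vc b) (nrm z)) then 1 else -1)
  else 0.

(* the chain  sum_{x in E} sum_{in(y)=x} y - sum_{x in iota E} sum_{in(y)=x} y :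
   its coefficient at the oriented edge (a,b). *)
Definition delta_edge (E : {set vert}) (a b : vert) : int :=
  if adj a b then
    ((a \in E)%:R - (b \in E)%:R - (a \in iotaS E)%:R + (b \in iotaS E)%:R)
  else 0.

(* ---------- inscribed cubes ----------
   A cube inscribed in D (its 8 vertices are vertices of D) is given by a
   labelling g : {0,1}^3 -> vertices of D, a (doubled) centre c2 and three
   (doubled) half-edge vectors w1 w2 w3, pairwise orthogonal and of the same
   nonzero length, with  2 * vc (g (e1,e2,e3)) = c2 ± w1 ± w2 ± w3. *)
Definition sgnv (b : bool) (w : vec) : vec := if b then w else vopp w.

Definition cube_param (g : bool * bool * bool -> vert) (c2 w1 w2 w3 : vec) : Prop :=
  [/\ forall t : bool * bool * bool,
        vdbl (vc (g t)) = vadd (vadd (vadd c2 (sgnv t.1.1 w1)) (sgnv t.1.2 w2)) (sgnv t.2 w3),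
      vdot w1 w2 = z0, vdot w1 w3 = z0, vdot w2 w3 = z0 &
      [/\ vdot w1 w1 = vdot w2 w2, vdot w1 w1 = vdot w3 w3 & vdot w1 w1 <> z0]].

Definition inscribed_cube (e : {set vert}) : Prop :=
  exists g c2 w1 w2 w3, cube_param g c2 w1 w2 w3 /\ e = [set g t | t in [set: bool * bool * bool]].

Definition hamming (s t : bool * bool * bool) : nat :=
  ((s.1.1 != t.1.1) + (s.1.2 != t.1.2) + (s.2 != t.2))%N.

Definition cube_adj (e : {set vert}) (x y : vert) : Prop :=
  exists g c2 w1 w2 w3, [/\ cube_param g c2 w1 w2 w3,
    e = [set g t | t in [set: bool * bool * bool]] &
    exists s t, [/\ x = g s, y = g t & hamming s t = 1%N]].

Lemma vlist_size : size vlist = 20%N. Proof. by []. Qed.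
Lemma vlist_uniq : uniq vlist. Proof. by vm_compute. Qed.
Lemma flist_uniq : size flist = 12%N /\ uniq flist. Proof. by vm_compute. Qed.

From mathcomp Require Import all_boot all_order all_algebra.
From mathcomp Require Import ring.
Import Order.TTheory GRing.Theory Num.Theory.
Local Open Scope ring_scope.

(* Four pairwise non-adjacent
      vertices of a cube are the vertices of one of its two inscribed regular
      tetrahedra: their labels in {0,1}^3 are pairwise at Hamming distance 2,
      so the squared distances between them all equal twice the squared edge
      of the cube.  An exhaustive search over the 20 vertices of D shows that
      any four vertices of D at equal mutual distances are one of the ten
      tetrahedra of the list [tets] below (two for each of the five cubes).
   2. Boundaries on D(zo).  For each tetrahedron E we exhibit face
      coefficients m, invariant under the antipodal map, with
      delta^E_edge = sum_z m_z dz (mod 3), checked by computation.  Since D is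
      a closed oriented surface, sum_z dz = 0, so m may be shifted by the
      constant m_zo; the shifted coefficients vanish on zo and on iota zo, so
      the chain is a boundary on D(zo). *)

(** * Natural-number indexed copy of the model, for computation *)

Definition sqd (u v : vec) : zphi := vdot (vsub u v) (vsub u v).

Definition vcn (n : nat) : vec := nth vzero vlist n.
Definition nrmn (n : nat) : vec := nth vzero flist n.
Definition sqdn (a b : nat) : zphi := sqd (vcn a) (vcn b).
Definition adjn (a b : nat) : bool := sqdn a b == zp 4 0.
Definition on_facen (z v : nat) : bool := vdot (vcn v) (nrmn z) == zp 1 2.
Definition bdryn (z a b : nat) : int :=
  if [&& adjn a b, on_facen z a & on_facen z b] then
    (if zpos (vdet (vcn a) (vcn b) (nrmn z)) then 1 else -1)
  else 0.

Definition ivtab : seq nat :=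
  [:: 7; 6; 5; 4; 3; 2; 1; 0; 11; 10; 9; 8; 15; 14; 13; 12; 19; 18; 17; 16]%N.
Definition iftab : seq nat := [:: 3; 2; 1; 0; 7; 6; 5; 4; 11; 10; 9; 8]%N.

Definition deltan (t : seq nat) (a b : nat) : int :=
  if adjn a b then
    (a \in t)%:R - (b \in t)%:R - (nth 0%N ivtab a \in t)%:R + (nth 0%N ivtab b \in t)%:R
  else 0.

(* The ten regular tetrahedra inscribed in D, and for each of them
   antipodally symmetric face coefficients of a mod-3 primitive. *)
Definition tets : seq (seq nat) :=
  [:: [:: 0; 3; 5; 6]; [:: 0; 9; 13; 18]; [:: 1; 2; 4; 7]; [:: 1; 8; 13; 19];
      [:: 2; 11; 12; 18]; [:: 3; 10; 12; 19]; [:: 4; 9; 15; 16]; [:: 5; 8; 15; 17];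
      [:: 6; 11; 14; 16]; [:: 7; 10; 14; 17]]%N.
Definition coef_table : seq (seq nat) :=
  [:: [:: 0; 0; 0; 0; 2; 2; 2; 2; 1; 1; 1; 1]; [:: 0; 2; 2; 0; 2; 1; 1; 2; 1; 0; 0; 1];
      [:: 0; 0; 0; 0; 1; 1; 1; 1; 2; 2; 2; 2]; [:: 0; 2; 2; 0; 0; 1; 1; 0; 2; 1; 1; 2];
      [:: 0; 2; 2; 0; 1; 0; 0; 1; 1; 2; 2; 1]; [:: 0; 2; 2; 0; 1; 2; 2; 1; 0; 1; 1; 0];
      [:: 0; 1; 1; 0; 2; 1; 1; 2; 0; 2; 2; 0]; [:: 0; 1; 1; 0; 2; 0; 0; 2; 2; 1; 1; 2];
      [:: 0; 1; 1; 0; 0; 2; 2; 0; 1; 2; 2; 1]; [:: 0; 1; 1; 0; 1; 2; 2; 1; 2; 0; 0; 2]]%N.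
Definition coefn (i z : nat) : int := (nth 0%N (nth [::] coef_table i) z)%:Z.

(* Facts about the model checked by evaluation (big operators are locked, so
   [unlock] is needed before they can be evaluated).  The tables describe the
   antipodal maps ... *)
Lemma ivtab_ok : all (fun n => [&& nth 0%N ivtab n < 20, vcn (nth 0%N ivtab n) == vopp (vcn n)
  & nth 0%N ivtab (nth 0%N ivtab n) == n]%N) (iota 0 20).
Proof. by vm_compute. Qed.

Lemma iftab_ok :
  all (fun n => (nth 0%N iftab n < 12)%N && (nrmn (nth 0%N iftab n) == vopp (nrmn n))) (iota 0 12).
Proof. by vm_compute. Qed.

Lemma closed_check : all (fun a => all (fun b =>
  adjn a b ==> (\sum_(0 <= z < 12) bdryn z a b == 0)) (iota 0 20)) (iota 0 20).
Proof. rewrite unlock; vm_compute; reflexivity. Qed.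

Lemma coef_check : all (fun i => all (fun a => all (fun b => adjn a b ==>
  (deltan (nth [::] tets i) a b == \sum_(0 <= z < 12) coefn i z * bdryn z a b %[mod 3])%Z)
  (iota 0 20)) (iota 0 20)) (iota 0 10).
Proof. rewrite unlock; vm_compute; reflexivity. Qed.

Lemma coef_sym_check :
  all (fun i => all (fun z => coefn i (nth 0%N iftab z) == coefn i z) (iota 0 12)) (iota 0 10).
Proof. by vm_compute. Qed.

(* ... and four vertices at equal mutual distances form one of the [tets].
   ([implb] is unfolded into [if] so that evaluation is lazy and prunes the search.) *)
Definition regular_check : bool :=
  all (fun a => all (fun b => (a != b) ==> let r := sqdn a b in all (fun c =>
    [&& c != a, c != b, sqdn a c == r & sqdn b c == r] ==> all (fun d =>
      [&& d != a, d != b, d != c, sqdn a d == r, sqdn b d == r & sqdn c d == r] ==>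
      has (fun i => perm_eq (nth [::] tets i) [:: a; b; c; d]) (iota 0 10))
    (iota 0 20)) (iota 0 20)) (iota 0 20)) (iota 0 20).

Lemma regular_check_ok : regular_check.
Proof. rewrite /regular_check /implb; vm_compute; reflexivity. Qed.

Lemma all_iotaP {n : nat} {P : pred nat} : all P (iota 0 n) -> forall i : 'I_n, P i.
Proof. by move=> /allP HP i; rewrite HP // mem_iota ltn_ord. Qed.

Lemma vcn_inj (i j : nat) : (i < 20)%N -> (j < 20)%N -> vcn i = vcn j -> i = j.
Proof.
move=> ilt jlt eqij; apply/eqP.
by rewrite -(nth_uniq vzero _ _ vlist_uniq) ?vlist_size //; apply/eqP.
Qed.

Lemma nrmn_inj (i j : nat) : (i < 12)%N -> (j < 12)%N -> nrmn i = nrmn j -> i = j.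
Proof.
case: flist_uniq => fsize funiq ilt jlt eqij; apply/eqP.
by rewrite -(nth_uniq vzero _ _ funiq) ?fsize //; apply/eqP.
Qed.

Lemma iotaV_val (v : vert) : val (iotaV v) = nth 0%N ivtab v.
Proof.
have /and3P [lt20 /eqP opp _] := all_iotaP ivtab_ok v.
rewrite /iotaV; case: pickP => [w /eqP wE | none] /=.
  by apply: vcn_inj => //; rewrite opp.
by have := none (Ordinal lt20); rewrite /vc /= -/(vcn _) opp eqxx.
Qed.

Lemma iotaF_val (z : face) : val (iotaF z) = nth 0%N iftab z.
Proof.
have /andP [lt12 /eqP opp] := all_iotaP iftab_ok z.
rewrite /iotaF; case: pickP => [w /eqP wE | none] /=.
  by apply: nrmn_inj => //; rewrite opp.
by have := none (Ordinal lt12); rewrite /nrm /= -/(nrmn _) opp eqxx.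
Qed.

(* iota is an involution, so iota E is the preimage of E under iota. *)
Lemma iotaVK : involutive iotaV.
Proof.
move=> v; apply: val_inj; rewrite !iotaV_val.
by have /and3P [_ _ /eqP] := all_iotaP ivtab_ok v.
Qed.

Lemma mem_iotaS (E : {set vert}) (a : vert) : (a \in iotaS E) = (iotaV a \in E).
Proof. by rewrite -[a in LHS]iotaVK (mem_imset _ _ (inv_inj iotaVK)). Qed.

Lemma sum_faces (F : nat -> int) : \sum_(z : face) F z = \sum_(0 <= z < 12) F z.
Proof. by rewrite big_mkord. Qed.

(** * Boundaries on D(zo) *)

Lemma sum_bdry0 (a b : vert) : adj a b -> \sum_(z : face) bdry z a b = 0.
Proof.
move=> ab; rewrite (sum_faces (fun z => bdryn z a b)).
by apply/eqP; move: (all_iotaP (all_iotaP closed_check a) b) => /implyP; apply.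
Qed.

Lemma sum_bdry_shift (m : face -> int) (k : int) (a b : vert) : adj a b ->
  \sum_(z : face) (m z - k) * bdry z a b = \sum_(z : face) m z * bdry z a b.
Proof.
move=> ab; under eq_bigr do rewrite mulrBl.
by rewrite sumrB -mulr_sumr sum_bdry0 // mulr0 subr0.
Qed.

Lemma sum_bdry_avoid (n : face -> int) (zo : face) (a b : vert) :
  n zo = 0 -> n (iotaF zo) = 0 ->
  \sum_(z : face | (z != zo) && (z != iotaF zo)) n z * bdry z a b =
  \sum_(z : face) n z * bdry z a b.
Proof.
move=> n0 n1; rewrite [RHS](bigID (fun z => (z != zo) && (z != iotaF zo))) /=.
rewrite [X in _ = _ + X]big1 ?addr0 // => z.
by rewrite negb_and !negbK => /orP [] /eqP ->; rewrite ?n0 ?n1 mul0r.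
Qed.

Lemma boundary_on_complement {c : vert -> vert -> int} {m : face -> int} :
  (forall z, m (iotaF z) = m z) ->
  (forall a b, adj a b -> (c a b == \sum_(z : face) m z * bdry z a b %[mod 3])%Z) ->
  forall zo : face, exists n : face -> int, forall a b, adj a b ->
    (c a b == \sum_(z : face | (z != zo) && (z != iotaF zo)) n z * bdry z a b %[mod 3])%Z.
Proof.
move=> m_sym cm zo; exists (fun z => m z - m zo) => a b ab.
by rewrite sum_bdry_avoid ?m_sym ?subrr // sum_bdry_shift // cm.
Qed.

Definition tet (i : 'I_10) : {set vert} := [set x : vert | val x \in nth [::] tets i].
Definition tet_coef (i : 'I_10) (z : face) : int := coefn i z.

Lemma tet_coefP (i : 'I_10) (a b : vert) : adj a b ->
  (delta_edge (tet i) a b == \sum_(z : face) tet_coef i z * bdry z a b %[mod 3])%Z.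
Proof.
have -> : delta_edge (tet i) a b = deltan (nth [::] tets i) a b.
  by rewrite /delta_edge /deltan !mem_iotaS !inE !iotaV_val.
rewrite (sum_faces (fun z => coefn i z * bdryn z a b)).
by move: (all_iotaP (all_iotaP (all_iotaP coef_check i) a) b) => /implyP.
Qed.

Lemma tet_coef_sym (i : 'I_10) (z : face) : tet_coef i (iotaF z) = tet_coef i z.
Proof.
by rewrite /tet_coef iotaF_val; apply/eqP; apply: (all_iotaP (all_iotaP coef_sym_check i)).
Qed.

Lemma regular_quadruple {a b c d : vert} (N : zphi) : uniq [:: a; b; c; d] ->
  {in [:: a; b; c; d] &, forall x y : vert, x != y -> sqdn x y = N} ->
  exists i : 'I_10, perm_eq (nth [::] tets i) [:: val a; val b; val c; val d].
Proof.
rewrite /= !inE => /and4P [/norP [ab /norP [ac ad]] /norP [bc bd] cd _] dist.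
have [ca cb da db dc] : [/\ c != a, c != b, d != a, d != b & d != c].
  by split; rewrite eq_sym.
have [ma mb mc md] : [/\ a \in [:: a; b; c; d], b \in [:: a; b; c; d],
    c \in [:: a; b; c; d] & d \in [:: a; b; c; d]] by rewrite !inE !eqxx !orbT.
have neq (x y : vert) : x != y -> (x : nat) != y by [].
have := all_iotaP (all_iotaP regular_check_ok a) b.
move=> /implyP /(_ (neq _ _ ab)) /(all_iotaP ^~ c).
rewrite (neq _ _ ca) (neq _ _ cb) (dist a b) ?(dist a c) ?(dist b c) // eqxx.
move=> /implyP/(_ isT)/(all_iotaP ^~ d).
rewrite (neq _ _ da) (neq _ _ db) (neq _ _ dc).
rewrite (dist a d) ?(dist b d) ?(dist c d) // eqxx => /implyP/(_ isT).
by case/hasP=> i; rewrite mem_iota add0n => /andP [_ ilt]; exists (Ordinal ilt).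
Qed.

Lemma equidistant_tet (E : {set vert}) (N : zphi) : #|E| = 4%N ->
  {in E &, forall x y, x != y -> sqd (vc x) (vc y) = N} -> exists i : 'I_10, E = tet i.
Proof.
move=> E4 distE; have := enum_uniq (mem E).
have memE x : (x \in E) = (x \in enum E) by rewrite mem_enum.
have := cardE E; rewrite E4.
case: (enum E) memE => [|a [|b [|c [|d [|? ?]]]]] // memE _ uniqE.
have [|i perm_abcd] := regular_quadruple N uniqE.
  by move=> x y; rewrite -!memE; exact: distE.
exists i; apply/setP => x; rewrite inE (perm_mem perm_abcd) memE.
by rewrite -(mem_map val_inj).
Qed.

(** * Squared distances between the vertices of an inscribed cube *)

Definition zsc (k : int) (x : zphi) : zphi := (k * x.1, k * x.2).
Definition vsc (k : int) (v : vec) : vec := mkv (zsc k (vx v)) (zsc k (vy v)) (zsc k (vz v)).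
Definition sgn (b : bool) : int := if b then 1 else -1.

Ltac vec_ring :=
  rewrite /sqd /zsc /vsc /sgnv /vdot /vsub /vdbl /vadd /vopp /zadd /zopp /zmul /mkv /vx /vy /vz /=;
  (do ?congr pair); ring.

Ltac dvec v :=
  let a1 := fresh "a" in let a2 := fresh "a" in let b1 := fresh "b" in
  let b2 := fresh "b" in let c1 := fresh "c" in let c2 := fresh "c" in
  case: v => [[[a1 a2] [b1 b2]] [c1 c2]].

Lemma zscM (k l : int) (x : zphi) : zsc k (zsc l x) = zsc (k * l) x.
Proof. by case: x => x1 x2; rewrite /zsc /= !mulrA. Qed.

Lemma zsc_inj (k : int) : k != 0 -> injective (zsc k).
Proof. by move=> k0 [x1 x2] [y1 y2] [/(mulfI k0) -> /(mulfI k0) ->]. Qed.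

Lemma sgnvE (b : bool) (w : vec) : sgnv b w = vsc (sgn b) w.
Proof. by dvec w; case: b; vec_ring. Qed.

Lemma sqd_dbl (u v : vec) : sqd (vdbl u) (vdbl v) = zsc 4 (sqd u v).
Proof. dvec u; dvec v; vec_ring. Qed.

Lemma vsub_frame (c w1 w2 w3 : vec) (k1 k2 k3 l1 l2 l3 : int) :
  vsub (vadd (vadd (vadd c (vsc k1 w1)) (vsc k2 w2)) (vsc k3 w3))
       (vadd (vadd (vadd c (vsc l1 w1)) (vsc l2 w2)) (vsc l3 w3)) =
  vadd (vadd (vsc (k1 - l1) w1) (vsc (k2 - l2) w2)) (vsc (k3 - l3) w3).
Proof. dvec c; dvec w1; dvec w2; dvec w3; vec_ring. Qed.

Lemma dotDl (u v x : vec) : vdot (vadd u v) x = zadd (vdot u x) (vdot v x).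
Proof. dvec u; dvec v; dvec x; vec_ring. Qed.

Lemma dotDr (u v x : vec) : vdot x (vadd u v) = zadd (vdot x u) (vdot x v).
Proof. dvec u; dvec v; dvec x; vec_ring. Qed.

Lemma dotZl (k : int) (u v : vec) : vdot (vsc k u) v = zsc k (vdot u v).
Proof. dvec u; dvec v; vec_ring. Qed.

Lemma dotZr (k : int) (u v : vec) : vdot u (vsc k v) = zsc k (vdot u v).
Proof. dvec u; dvec v; vec_ring. Qed.

Lemma dotC (u v : vec) : vdot u v = vdot v u.
Proof. dvec u; dvec v; vec_ring. Qed.

Lemma dot_frame (w1 w2 w3 : vec) (k1 k2 k3 : int) :
  vdot w1 w2 = z0 -> vdot w1 w3 = z0 -> vdot w2 w3 = z0 ->
  vdot w1 w1 = vdot w2 w2 -> vdot w1 w1 = vdot w3 w3 ->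
  let u := vadd (vadd (vsc k1 w1) (vsc k2 w2)) (vsc k3 w3) in
  vdot u u = zsc (k1 ^+ 2 + k2 ^+ 2 + k3 ^+ 2) (vdot w1 w1).
Proof.
move=> o12 o13 o23 n2 n3 /=.
rewrite !dotDl !dotDr !dotZl !dotZr (dotC w2 w1) (dotC w3 w1) (dotC w3 w2).
rewrite o12 o13 o23 -n2 -n3.
case: (vdot w1 w1) => n1 n2'; rewrite /zadd /zsc /z0 /zp /=; congr pair; ring.
Qed.

Lemma cube_sqd {g : bool * bool * bool -> vert} {c2 w1 w2 w3 : vec} (s t : bool * bool * bool) :
  cube_param g c2 w1 w2 w3 ->
  sqd (vc (g s)) (vc (g t)) = zsc (hamming s t)%:Z (vdot w1 w1).
Proof.
case=> gE o12 o13 o23 [n2 n3 _]; apply: (@zsc_inj 4) => //.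
rewrite -sqd_dbl /sqd !gE !sgnvE vsub_frame dot_frame // zscM; congr zsc.
by case: s t => [[[] []] []] [[[] []] []].
Qed.

(** * Independent sets of the 3-cube *)

Lemma hamming_eq0 (s t : bool * bool * bool) : hamming s t = 0%N -> s = t.
Proof. by case: s t => [[[] []] []] [[[] []] []]. Qed.

Lemma hamming_le3 (s t : bool * bool * bool) : (hamming s t <= 3)%N.
Proof. by case: s t => [[[] []] []] [[[] []] []]. Qed.

Lemma hamming_antipodal (s t u : bool * bool * bool) : hamming s t = 3%N ->
  [|| u == s, u == t, hamming s u == 1%N | hamming t u == 1%N].
Proof. by case: s t u => [[[] []] []] [[[] []] []] [[[] []] []]. Qed.

Lemma cube_independent {S : {set bool * bool * bool}} : (3 <= #|S|)%N ->
  {in S &, forall s t, hamming s t <> 1%N} ->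
  {in S &, forall s t, s != t -> hamming s t = 2%N}.
Proof.
move=> S3 indepS s t sS tS st; have := hamming_le3 s t.
case dst: (hamming s t) => [|[|[|[|n]]]] // _.
- by move: st; rewrite (hamming_eq0 _ _ dst) eqxx.
- by case: (indepS _ _ sS tS dst).
have : S \subset [set s; t].
  apply/subsetP => u uS; rewrite !inE.
  case/or4P: (hamming_antipodal _ _ u dst) => [->|->|/eqP su|/eqP tu]; rewrite ?orbT //.
    by case: (indepS _ _ sS uS su).
  by case: (indepS _ _ tS uS tu).
by move=> /subset_leq_card; rewrite cards2 => /(leq_trans S3); case: (_ != _).
Qed.

(* Four pairwise non-adjacent vertices of an inscribed cube are at equal mutual
   distances, hence form one of the ten tetrahedra. *)
Lemma cube_independent_tet {e E : {set vert}} :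
  inscribed_cube e -> E \subset e -> #|E| = 4%N ->
  (forall x y, x \in E -> y \in E -> ~ cube_adj e x y) -> exists i : 'I_10, E = tet i.
Proof.
case=> g [c2 [w1 [w2 [w3 [cube eE]]]]] Ee E4 indepE.
pose S := [set t | g t \in E].
have ES : E \subset g @: S.
  apply/subsetP => x xE; move: (subsetP Ee x xE); rewrite eE => /imsetP [t _ xt].
  by apply/imsetP; exists t; rewrite // inE -xt.
have S3 : (3 <= #|S|)%N.
  apply: leq_trans (leq_imset_card g S).
  by apply: leq_trans (subset_leq_card ES); rewrite E4.
have indepS : {in S &, forall s t, hamming s t <> 1%N}.
  move=> s t; rewrite !inE => sE tE st1; apply: (indepE _ _ sE tE).
  by exists g, c2, w1, w2, w3; split => //; exists s, t.
apply: (@equidistant_tet _ (zsc 2 (vdot w1 w1))) => // x y xE yE xy.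
move: (subsetP ES x xE) (subsetP ES y yE) => /imsetP [s sS xs] /imsetP [t tS yt].
rewrite xs yt (cube_sqd s t cube) (cube_independent S3 indepS) //.
by apply: contraNneq xy => st; rewrite xs yt st.
Qed.

Theorem lemma3p7 (e E : {set vert}) :
  inscribed_cube e ->
  E \subset e -> #|E| = 4%N ->
  (forall x y, x \in E -> y \in E -> ~ cube_adj e x y) ->
  forall zo : face,
  exists n : face -> int,
    forall a b : vert, adj a b ->
      (delta_edge E a b ==
         \sum_(z : face | (z != zo) && (z != iotaF zo)) n z * bdry z a b %[mod 3])%Z.
Proof.
move=> cube Ee E4 indepE.
have [i ->] := cube_independent_tet cube Ee E4 indepE.
exact: boundary_on_complement (tet_coef_sym i) (tet_coefP i).
Qed.
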